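(* Let $t>2$ and let $G=K_{n_1,n_2,\dots,n_t}$ be the complete $t$-partite graph with parts of sizes $n_1,\dots,n_t$, where $n_i\geq 2$ for all $i=1,\dots,t$. Then $G$ is a $\mathcal{P}$ position for Grim if and only if $|V(G)|=n_1+\dots+n_t$ is even.
   Context: Grim is a two-player game on a finite simple undirected graph. Any isolated vertices of the starting graph are deleted before play begins. Players alternate moves; a move consists of selecting a vertex of the current graph and deleting it together with all its incident edges, after which every vertex that has become isolated is also deleted. The player who makes the last legal move wins (a player facing the empty graph has no move and loses). A graph is an $\mathcal{N}$ position if the player about to move has a winning strategy, and a $\mathcal{P}$ position otherwise. *)

From mathcomp Require Import all_boot.
Set Implicit Arguments. Unset Strict Implicit. Unset Printing Implicit Defensive.

(* A finite simple graph is a symmetric irreflexive relation e on a finType T.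
   A Grim position is the subgraph induced by a vertex set S (a {set T}). *)

Definition non_isolated (T : finType) (e : rel T) (S : {set T}) : {set T} :=
  [set x in S | [exists y in S, e x y]].

Definition grim_move (T : finType) (e : rel T) (S : {set T}) (v : T) : {set T} :=
  non_isolated e (S :\ v).

Definition grim_start (T : finType) (e : rel T) : {set T} :=
  non_isolated e [set: T].

(* P-positions (previous player wins) and N-positions (next player wins),
   normal play: a player with no move loses. *)
Inductive Ppos (T : finType) (e : rel T) : {set T} -> Prop :=
  | PposI (S : {set T}) : (forall v : T, v \in S -> Npos e (grim_move e S v)) -> Ppos e S
with Npos (T : finType) (e : rel T) : {set T} -> Prop :=
  | NposI (S : {set T}) (v : T) : v \in S -> Ppos e (grim_move e S v) -> Npos e S.

(* Complete t-partite graph K_{n_1,...,n_t}: vertices are pairs (i, j) with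
   i a part index and j < n i; two vertices are adjacent iff in different parts. *)
Definition cmp_vertex (t : nat) (n : 'I_t -> nat) := {i : 'I_t & 'I_(n i)}.

Definition cmp_edge (t : nat) (n : 'I_t -> nat) : rel (cmp_vertex n) :=
  fun x y => tag x != tag y.

From mathcomp Require Import all_boot.
Set Implicit Arguments. Unset Strict Implicit.

(* In a complete multipartite graph a position is a vertex set S, and deleting
   a vertex v only isolates vertices when v was the last vertex outside a single
   remaining part, in which case everything disappears. The P-positions are the
   positions of even size in which no part has exactly one vertex: any move
   leaves an odd position with at most one singleton part, and from such a
   position one restores the invariant by deleting the singleton vertex if there
   is one, and otherwise a vertex of a part with at least three vertices (which
   exists by parity). For K_{n_1,...,n_t} with all n_i >= 2 only parity remains. *)

Section GrimGame.
Variables (T : finType) (e : rel T).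

Lemma non_isolated_subset (S : {set T}) : non_isolated e S \subset S.
Proof. by apply/subsetP => x; rewrite inE => /andP[]. Qed.

Lemma card_grim_move (S : {set T}) v : v \in S -> #|grim_move e S v| < #|S|.
Proof.
move=> vS; apply: leq_ltn_trans (subset_leq_card (non_isolated_subset _)) _.
by rewrite (cardsD1 v S) vS.
Qed.

Lemma Ppos_Npos_disjoint (S : {set T}) : Ppos e S -> Npos e S -> False.
Proof.
have [k] := ubnP #|S|; elim: k S => // k IH S /ltnSE leSk PS NS.
case: NS leSk PS => {}S v vS Pv leSk PS.
apply: IH (leq_trans (card_grim_move vS) leSk) Pv _.
by case: PS leSk vS => {}S PSv _ /PSv.
Qed.

Lemma Ppos_Npos_of_strategy (P N : {set T} -> Prop) :
    (forall S v, P S -> v \in S -> N (grim_move e S v)) ->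
    (forall S, N S -> exists2 v, v \in S & P (grim_move e S v)) ->
  forall S, (P S -> Ppos e S) /\ (N S -> Npos e S).
Proof.
move=> PN NP S; have [k] := ubnP #|S|; elim: k S => // k IH S /ltnSE leSk.
have IHmove v : v \in S -> _ := fun vS => IH _ (leq_trans (card_grim_move vS) leSk).
split=> [PS | /NP[v vS Pv]].
- by constructor=> v vS; apply: (proj2 (IHmove v vS)); apply: PN.
- by apply: (NposI vS); apply: (proj1 (IHmove v vS)).
Qed.

End GrimGame.

Definition multipartite (I : eqType) (T : Type) (part : T -> I) : rel T :=
  fun x y => part x != part y.

Section MultipartiteGrim.
Variables (I T : finType) (part : T -> I).
Local Notation adj := (multipartite part).

Definition part_card (S : {set T}) i := #|[set x in S | part x == i]|.

Lemma part_cardD1 (S : {set T}) v i : v \in S ->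
  part_card (S :\ v) i = part_card S i - (part v == i).
Proof.
move=> vS; rewrite /part_card.
have [<-|vi] := eqVneq (part v) i.
  rewrite (cardsD1 v [set x in S | part x == part v]) !inE vS eqxx subn1 /=.
  by apply: eq_card => x; rewrite !inE andbA.
rewrite subn0; apply: eq_card => x; rewrite !inE.
by have [->|] := eqVneq x v; rewrite ?(negbTE vi) ?andbF.
Qed.

Lemma card_part_sum (S : {set T}) : #|S| = \sum_i part_card S i.
Proof.
rewrite -sum1_card (partition_big part predT) //=.
by apply: eq_bigr => i _; rewrite sum1_card; apply: eq_card => x; rewrite !inE.
Qed.

Lemma part_card_gt0P (S : {set T}) i :
  reflect (exists2 v, v \in S & part v = i) (0 < part_card S i).
Proof.
rewrite /part_card card_gt0; apply: (iffP (set0Pn _)) => [[v]|[v vS <-]].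
  by rewrite inE => /andP[vS /eqP]; exists v.
by exists v; rewrite inE vS eqxx.
Qed.

Lemma non_isolated_multipartite (S : {set T}) x y :
  x \in S -> y \in S -> part x != part y -> non_isolated adj S = S.
Proof.
move=> xS yS xy; apply/setP => z; rewrite inE andb_idr // => zS.
apply/existsP; have [zx|zx] := eqVneq (part z) (part x).
  by exists y; rewrite yS /multipartite zx.
by exists x; rewrite xS /multipartite zx.
Qed.

Lemma non_isolated_multipartite_cases (S : {set T}) :
  non_isolated adj S = S \/ non_isolated adj S = set0.
Proof.
have [->|[x]] := set_0Vmem (non_isolated adj S); first by right.
rewrite inE => /andP[xS /existsP[y /andP[yS xy]]].
by left; apply: non_isolated_multipartite xS yS xy.
Qed.

Definition p_shape (S : {set T}) :=
  [/\ non_isolated adj S = S, forall i, part_card S i != 1 & ~~ odd #|S|].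

Definition n_shape (S : {set T}) :=
  odd #|S| /\ forall i j, part_card S i = 1 -> part_card S j = 1 -> i = j.

Lemma p_shape_non_isolated (S : {set T}) :
  (forall i, part_card S i != 1) -> ~~ odd #|S| -> p_shape (non_isolated adj S).
Proof.
move=> S_no1 S_even.
have [S_ni | S_ni] := non_isolated_multipartite_cases S; rewrite S_ni; first by split.
split=> [|i|]; last by rewrite cards0.
- by apply/eqP; rewrite -subset0 non_isolated_subset.
- rewrite /part_card (_ : [set x in set0 | _] = set0) ?cards0 //.
  by apply/setP => x; rewrite !inE.
Qed.

Lemma p_shape_move (S : {set T}) v :
  p_shape S -> v \in S -> n_shape (grim_move adj S v).
Proof.
move=> [S_ni S_no1 S_even] vS.
have two_v : 1 < part_card S (part v).
  rewrite ltn_neqAle eq_sym S_no1; apply/part_card_gt0P; by exists v.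
have /part_card_gt0P[w wS wv] : 0 < part_card (S :\ v) (part v).
  by rewrite part_cardD1 // eqxx subn_gt0.
move: vS; rewrite -{1}S_ni inE => /andP[vS /existsP[y /andP[yS vy]]].
have yS' : y \in S :\ v.
  by rewrite !inE yS andbT; apply: contraNneq vy => ->; rewrite /multipartite eqxx.
rewrite /grim_move (non_isolated_multipartite wS yS') ?wv //; split.
  by move: S_even; rewrite (cardsD1 v S) vS add1n negbK.
suff single i : part_card (S :\ v) i = 1 -> i = part v.
  by move=> i j /single -> /single ->.
rewrite part_cardD1 //; have [// | vi] := eqVneq (part v) i.
by rewrite subn0 => /eqP; rewrite (negbTE (S_no1 i)).
Qed.

Lemma part_card_gt2_of_odd (S : {set T}) :
  odd #|S| -> (forall i, part_card S i != 1) -> exists i, 2 < part_card S i.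
Proof.
move=> S_odd S_no1; apply/existsP; apply: contraLR S_odd => /existsPn small.
rewrite card_part_sum; apply: (big_ind (fun m => ~~ odd m)) => // [m k|i _].
  by rewrite oddD => /negbTE-> /negbTE->.
by move: (small i) (S_no1 i); case: (part_card S i) => [|[|[|]]].
Qed.

Lemma n_shape_move (S : {set T}) :
  n_shape S -> exists2 v, v \in S & p_shape (grim_move adj S v).
Proof.
move=> [S_odd S_one1].
suff [v vS Sv_no1] : exists2 v, v \in S & forall j, part_card (S :\ v) j != 1.
  exists v => //; apply: p_shape_non_isolated => //.
  by move: S_odd; rewrite (cardsD1 v S) vS.
case: (boolP [exists i, part_card S i == 1]) => [/existsP[i /eqP Si1] | /existsPn S_no1].
  have /part_card_gt0P[v vS vi] : 0 < part_card S i by rewrite Si1.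
  exists v => // j; rewrite part_cardD1 // vi.
  have [<- | ij] := eqVneq i j; first by rewrite Si1.
  by rewrite subn0; apply: contra_neq ij => /(S_one1 _ _ Si1).
have [i Si3] := part_card_gt2_of_odd S_odd S_no1.
have /part_card_gt0P[v vS vi] : 0 < part_card S i by apply: ltnW (ltnW Si3).
exists v => // j; rewrite part_cardD1 // vi.
have [<- | ij] := eqVneq i j; last by rewrite subn0 S_no1.
by move: Si3; case: (part_card S i) => [|[|[|]]].
Qed.

Lemma multipartite_Ppos_Npos (S : {set T}) :
  (p_shape S -> Ppos adj S) /\ (n_shape S -> Npos adj S).
Proof. exact: Ppos_Npos_of_strategy p_shape_move n_shape_move S. Qed.

End MultipartiteGrim.

Section CompleteMultipartite.
Variables (t : nat) (n : 'I_t -> nat).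

Lemma part_card_cmp_vertex i : part_card tag [set: cmp_vertex n] i = n i.
Proof.
have Tagged_inj := @eq_from_Tagged _ (fun i => 'I_(n i)) i.
rewrite -[n i]card_ord -(cardsT 'I_(n i)) -(card_imset _ Tagged_inj).
apply: eq_card => x; rewrite !inE; apply/eqP/imsetP => [tx | [j _ ->] //].
by exists (etagged tx); rewrite ?etaggedK.
Qed.

Lemma card_cmp_vertex : #|[set: cmp_vertex n]| = \sum_(i < t) n i.
Proof.
by rewrite (card_part_sum tag); apply: eq_bigr => i _; apply: part_card_cmp_vertex.
Qed.

Lemma non_isolated_cmp_vertex : 1 < t -> (forall i, 0 < n i) ->
  non_isolated (multipartite tag) [set: cmp_vertex n] = [set: cmp_vertex n].
Proof.
move=> t_gt1 n_gt0; pose vtx i : cmp_vertex n := Tagged _ (Ordinal (n_gt0 i)).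
by apply: (@non_isolated_multipartite _ _ _ _
  (vtx (Ordinal (ltnW t_gt1))) (vtx (Ordinal t_gt1))).
Qed.

End CompleteMultipartite.

Theorem theorem3p4 (t : nat) (n : 'I_t -> nat) :
  2 < t -> (forall i, 2 <= n i) ->
  (Ppos (@cmp_edge t n) (grim_start (@cmp_edge t n)) <->
   ~~ odd (\sum_(i < t) n i)).
Proof.
move=> t_gt2 n_ge2; have -> : @cmp_edge t n = multipartite tag by [].
have start := non_isolated_cmp_vertex (ltnW t_gt2) (fun i => ltnW (n_ge2 i)).
have no_single i : part_card tag [set: cmp_vertex n] i != 1.
  by rewrite part_card_cmp_vertex; case: (n i) (n_ge2 i) => [|[]].
have [p_shapeP n_shapeN] := multipartite_Ppos_Npos tag [set: cmp_vertex n].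
rewrite /grim_start start -card_cmp_vertex; split=> [P_start | V_even].
- apply/negP => V_odd; apply: Ppos_Npos_disjoint P_start (n_shapeN _).
  by split=> // i j /eqP; rewrite (negbTE (no_single i)).
- exact: p_shapeP.
Qed.
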